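(* Let $m,n$ be natural numbers and let $F_{ij}=\int_{-1}^{1}P_{i-1}(\eta)\,\eta^{j-1}\,d\eta$. For each natural $k$ let $\mathbf f_{k,\bullet}=(F_{k1},\dots,F_{k,n+1})^T$, and let $\mathbf f'=(F_{1,m+1},F_{1,m+2},\dots,F_{1,m+n+1})^T$. Then \[ \mathbf f'=\sum_{i=1}^{m+1}\alpha_i\,\mathbf f_{i,\bullet},\qquad \alpha_i=\frac{2i-1}{2}F_{i,m+1}. \]
   Context: $P_k$ denotes the Legendre polynomial of degree $k$; $F$ is the matrix of moments of the Legendre polynomials. (Note $F_{i,m+1}=0$ whenever $i+m+1$ is odd, so only $i$ of the same parity as $m+1$ contribute.) *)

From Stdlib Require Import Reals.
From Coquelicot Require Import Coquelicot.
Open Scope R_scope.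

(* Legendre polynomials via Bonnet's recurrence:
   P_0 = 1, P_1 = x, (k+1) P_{k+1} = (2k+1) x P_k - k P_{k-1}.
   legendre_pair k x = (P_k x, P_{k+1} x). *)
Fixpoint legendre_pair (k : nat) (x : R) : R * R :=
  match k with
  | O => (1, x)
  | S k' =>
      let (p, q) := legendre_pair k' x in
      (q, ((2 * INR k' + 3) * x * q - (INR k' + 1) * p) / (INR k' + 2))
  end.

Definition legendreP (k : nat) (x : R) : R := fst (legendre_pair k x).

Definition F (i j : nat) : R :=
  RInt (fun eta => legendreP (i - 1) eta * eta ^ (j - 1)) (-1) 1.

(* The claim is the identity
   moment 0 (m + i) = sum_{k <= m} (2k+1)/2 moment k m moment k i,
   i.e. the Legendre expansion of x^m paired with x^i, but it is proved purely
   on moments.  Bonnet's recurrence gives the three-term relation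
   (2k+1) moment k (n+1) = (k+1) moment (k+1) n + k moment (k-1) n, and also two
   first-order recurrences in (k, n) from which orthogonality, moment k n = 0 for
   n < k, follows.  One then inducts on i, moving a power of x from x^i to x^m:
   by the three-term relation the difference of the two sums telescopes
   (Christoffel-Darboux) to a boundary term in moment (N+1) m and moment (N+2) m,
   which vanish by orthogonality. *)

From Stdlib Require Import Reals Lra Lia.
From Coquelicot Require Import Coquelicot.
Open Scope R_scope.

Lemma legendreP_0 x : legendreP 0 x = 1.
Proof. reflexivity. Qed.

Lemma legendreP_1 x : legendreP 1 x = x.
Proof. reflexivity. Qed.

Lemma legendreP_SS k x : legendreP (S (S k)) x =
  ((2 * INR k + 3) * x * legendreP (S k) x - (INR k + 1) * legendreP k x) / (INR k + 2).
Proof. unfold legendreP; simpl; now destruct (legendre_pair k x). Qed.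

Lemma continuous_Rpow n x : continuous (fun y => y ^ n) x.
Proof. apply continuity_pt_filterlim, derivable_continuous, derivable_pow. Qed.

Lemma continuous_Rmult (f g : R -> R) x :
  continuous f x -> continuous g x -> continuous (fun y => f y * g y) x.
Proof. exact (continuous_mult f g x). Qed.

Lemma continuous_Rminus (f g : R -> R) x :
  continuous f x -> continuous g x -> continuous (fun y => f y - g y) x.
Proof. exact (continuous_minus (V := R_NormedModule) f g x). Qed.

Lemma continuous_legendreP k x : continuous (legendreP k) x.
Proof.
  enough (H : continuous (legendreP k) x /\ continuous (legendreP (S k)) x) by apply H.
  induction k as [|k [IHk IHSk]]; split; try assumption.
  - apply continuous_const.
  - apply continuous_id.
  - apply (continuous_ext (fun y => ((2 * INR k + 3) * y * legendreP (S k) y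
                                     - (INR k + 1) * legendreP k y) * / (INR k + 2))).
    { intro y; now rewrite legendreP_SS. }
    apply continuous_Rmult; [|apply continuous_const].
    apply continuous_Rminus; apply continuous_Rmult; try assumption; try apply continuous_const.
    apply continuous_Rmult; [apply continuous_const|apply continuous_id].
Qed.

Definition moment (k n : nat) : R := RInt (fun x => legendreP k x * x ^ n) (-1) 1.

Lemma F_moment k n : F (S k) (S n) = moment k n.
Proof. unfold F, moment; simpl; now rewrite !Nat.sub_0_r. Qed.

Lemma ex_RInt_moment k n : ex_RInt (fun x => legendreP k x * x ^ n) (-1) 1.
Proof.
  apply (ex_RInt_continuous (V := R_CompleteNormedModule)); intros x _.
  apply continuous_Rmult; [apply continuous_legendreP|apply continuous_Rpow].
Qed.

Lemma moment_0 n : moment 0 n = (1 - (-1) ^ S n) / INR (S n).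
Proof.
  assert (Hn : INR (S n) <> 0) by (apply not_0_INR; discriminate).
  unfold moment; rewrite (RInt_ext _ (fun x => x ^ n)).
  2: { intros; now rewrite legendreP_0, Rmult_1_l. }
  replace ((1 - (-1) ^ S n) / INR (S n))
    with (minus (1 ^ S n / INR (S n)) ((-1) ^ S n / INR (S n)))
    by (rewrite pow1; unfold minus, plus, opp; simpl; field; exact Hn).
  apply is_RInt_unique, (is_RInt_derive (fun x => x ^ S n / INR (S n))).
  - intros x _; auto_derive; trivial.
    change (match n with O => 1 | S _ => INR n + 1 end) with (INR (S n)).
    field; exact Hn.
  - intros y _; apply continuous_Rpow.
Qed.

Lemma moment_1 n : moment 1 n = moment 0 (S n).
Proof. unfold moment; apply RInt_ext; intros; rewrite legendreP_0, legendreP_1; simpl; ring. Qed.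

Lemma moment_SS k n : (INR k + 2) * moment (S (S k)) n =
  (2 * INR k + 3) * moment (S k) (S n) - (INR k + 1) * moment k n.
Proof.
  assert (Hk : INR k + 2 <> 0) by (pose proof (pos_INR k); lra).
  unfold moment.
  rewrite (RInt_ext _ (fun x => scal (/ (INR k + 2))
      (minus (scal (2 * INR k + 3) (legendreP (S k) x * x ^ S n))
             (scal (INR k + 1) (legendreP k x * x ^ n))))).
  2: { intros x _; rewrite legendreP_SS; unfold scal, minus, plus, opp; simpl.
       unfold mult; simpl; field; exact Hk. }
  rewrite (@RInt_scal R_CompleteNormedModule).
  2: { apply (@ex_RInt_minus R_NormedModule); apply (@ex_RInt_scal R_NormedModule);
       apply ex_RInt_moment. }
  rewrite (@RInt_minus R_CompleteNormedModule)
    by (apply (@ex_RInt_scal R_NormedModule); apply ex_RInt_moment).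
  rewrite !(@RInt_scal R_CompleteNormedModule) by apply ex_RInt_moment.
  unfold scal, minus, plus, opp; simpl; unfold mult; simpl; field; exact Hk.
Qed.

Lemma moment_0_0 : moment 0 0 = 2.
Proof. rewrite moment_0; simpl; field. Qed.

Lemma moment_0_1 : moment 0 1 = 0.
Proof. rewrite moment_0; simpl; field. Qed.

Lemma moment_0_SS n : (INR n + 3) * moment 0 (S (S n)) = (INR n + 1) * moment 0 n.
Proof.
  rewrite !moment_0, !S_INR; simpl pow.
  pose proof (pos_INR n); field; lra.
Qed.

(* 1 / (integral of P_k^2); the paper's alpha_{k+1} is legendre_weight k * moment k m. *)
Definition legendre_weight (k : nat) : R := (2 * INR k + 1) / 2.

Lemma weighted_moment_succ_r k n : legendre_weight k * moment k (S n) =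
  ((INR k + 1) * moment (S k) n + INR k * moment (pred k) n) / 2.
Proof.
  unfold legendre_weight; destruct k as [|k].
  - rewrite moment_1; simpl; field.
  - pose proof (moment_SS k n); simpl pred; rewrite S_INR; lra.
Qed.

Lemma moment_succ_rels k :
  (forall n, (INR n + INR k + 3) * moment (S k) (S n) = (INR n + 1) * moment k n) /\
  (forall n, (INR n + 1) * moment (S k) n = (INR n + 1 - INR k) * moment k (S n)).
Proof.
  induction k as [|k [IHdiag IHl]].
  - simpl INR; split; intro n; rewrite moment_1.
    + pose proof (moment_0_SS n); lra.
    + ring.
  - assert (Hk : 0 < INR k + 2) by (pose proof (pos_INR k); lra).
    rewrite !S_INR; split; intro n; apply Rmult_eq_reg_l with (INR k + 2); try lra.
    + pose proof (moment_SS k (S n)) as Hrec; pose proof (IHdiag (S n)) as Hdiag;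
        pose proof (IHl n) as Hl; rewrite S_INR in Hdiag.
      transitivity ((INR n + INR k + 4) * ((INR k + 2) * moment (S (S k)) (S n))); [ring|].
      rewrite Hrec.
      transitivity ((2 * INR k + 3) * ((INR n + 1 + INR k + 3) * moment (S k) (S (S n)))
                    - (INR n + INR k + 4) * (INR k + 1) * moment k (S n)); [ring|].
      rewrite Hdiag, Hl; ring.
    + pose proof (moment_SS k n) as Hrec; pose proof (IHdiag n) as Hdiag.
      transitivity ((INR n + 1) * ((INR k + 2) * moment (S (S k)) n)); [ring|].
      rewrite Hrec.
      transitivity ((INR n + 1) * (2 * INR k + 3) * moment (S k) (S n)
                    - (INR k + 1) * ((INR n + 1) * moment k n)); [ring|].
      rewrite <- Hdiag; ring.
Qed.

Lemma moment_succ_diag k n :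
  (INR n + INR k + 3) * moment (S k) (S n) = (INR n + 1) * moment k n.
Proof. apply moment_succ_rels. Qed.

Lemma moment_succ_l k n :
  (INR n + 1) * moment (S k) n = (INR n + 1 - INR k) * moment k (S n).
Proof. apply moment_succ_rels. Qed.

Lemma moment_SS_0 k : (INR k + 3) * moment (S (S k)) 0 = - INR k * moment k 0.
Proof.
  pose proof (moment_succ_l (S k) 0) as Hl; pose proof (moment_succ_diag k 0) as Hdiag.
  rewrite S_INR in Hl; simpl INR in Hl, Hdiag.
  replace (moment (S (S k)) 0) with (- INR k * moment (S k) 1) by lra.
  transitivity (- INR k * ((0 + INR k + 3) * moment (S k) 1)); [ring|].
  rewrite Hdiag; ring.
Qed.

Lemma moment_S_0 k : moment (S k) 0 = 0.
Proof.
  enough (H : moment (S k) 0 = 0 /\ moment (S (S k)) 0 = 0) by apply H.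
  induction k as [|k [IH IHS]]; split; try assumption.
  - rewrite moment_1; apply moment_0_1.
  - pose proof (moment_SS_0 0) as H0; simpl INR in H0; lra.
  - pose proof (moment_SS_0 (S k)) as H0; rewrite IH, S_INR in H0.
    pose proof (pos_INR k); nra.
Qed.

Lemma moment_eq_0_of_lt n k : (n < k)%nat -> moment k n = 0.
Proof.
  revert k; induction n as [|n IH]; intros [|k] Hk; try lia.
  - apply moment_S_0.
  - pose proof (moment_succ_diag k n) as Hdiag; rewrite IH in Hdiag by lia.
    pose proof (pos_INR n); pose proof (pos_INR k); nra.
Qed.

Lemma sum_f_R0_head (f : nat -> R) N :
  (forall k, (0 < k <= N)%nat -> f k = 0) -> sum_f_R0 f N = f 0%nat.
Proof.
  induction N as [|N IH]; intro Hf; [reflexivity|].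
  rewrite tech5, IH, (Hf (S N)) by (lia || (intros; apply Hf; lia)); ring.
Qed.

Lemma christoffel_darboux_moment m i N :
  sum_f_R0 (fun k => legendre_weight k * moment k (S m) * moment k i
                     - legendre_weight k * moment k m * moment k (S i)) N =
  (INR N + 1) / 2 * (moment (S N) m * moment N i - moment N m * moment (S N) i).
Proof.
  assert (Hswap : forall k, legendre_weight k * moment k m * moment k (S i) =
                            legendre_weight k * moment k (S i) * moment k m) by (intro; ring).
  induction N as [|N IH]; simpl sum_f_R0; rewrite ?IH; cbv beta;
    rewrite Hswap, !weighted_moment_succ_r; simpl pred; rewrite ?S_INR; simpl INR; field.
Qed.

Lemma moment_0_add m i N : (m <= N)%nat ->
  moment 0 (m + i) = sum_f_R0 (fun k => legendre_weight k * moment k m * moment k i) N.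
Proof.
  revert m N; induction i as [|i IH]; intros m N HmN.
  - rewrite sum_f_R0_head.
    2: { intros [|k] Hk; [lia|]; rewrite moment_S_0; ring. }
    rewrite Nat.add_0_r, moment_0_0; unfold legendre_weight; simpl; field.
  - rewrite Nat.add_succ_r, <- Nat.add_succ_l, (IH (S m) (S N)) by lia.
    apply Rminus_diag_uniq.
    replace (sum_f_R0 (fun k => legendre_weight k * moment k m * moment k (S i)) N)
      with (sum_f_R0 (fun k => legendre_weight k * moment k m * moment k (S i)) (S N))
      by (rewrite tech5, (moment_eq_0_of_lt m (S N)) by lia; ring).
    rewrite <- minus_sum, christoffel_darboux_moment,
      (moment_eq_0_of_lt m (S N)), (moment_eq_0_of_lt m (S (S N))) by lia; ring.
Qed.

Theorem mainTheorem10 (m n : nat) :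
  forall j : nat, (1 <= j <= n + 1)%nat ->
    F 1 (m + j) =
    sum_f_R0 (fun k => ((2 * INR (S k) - 1) / 2 * F (S k) (m + 1)) * F (S k) j) m.
Proof.
  intros [|i] Hj; [lia|].
  replace (m + S i)%nat with (S (m + i)) by lia.
  replace (m + 1)%nat with (S m) by lia.
  rewrite F_moment, (moment_0_add m i m) by lia.
  apply sum_eq; intros k _.
  rewrite !F_moment, S_INR; unfold legendre_weight; field.
Qed.
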